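(* Let $\mathcal{A}=\{A_1,\dots,A_m\}$ be a bimodal collection of pairwise disjoint nonempty subsets of a finite abelian group $G$, with internal difference groups $H_1,\dots,H_m$, labelled so that $|A_i|<|H_i|$ exactly for $i=1,\dots,r$, where $r\ge2$. Let $D=(a_1+H_1)\setminus A_1$, where $a_1+H_1$ is the coset of $H_1$ containing $A_1$, and suppose $\mathcal{A}$ is in canonical position, i.e. $D$ is a subgroup of $G$. Let $A=A_1\cup\dots\cup A_m$ and $H=H_1+H_2+\dots+H_r$. If $A\setminus H$ is nonempty, then $A\setminus H$ is a union of cosets of $H$, and the sets $A_i$ lying in $A\setminus H$ arise from a subdivision of these cosets of $H$: they partition $A\setminus H$ and each of them is contained in a single coset of $H$.
   Context: $G$ is written additively. The internal difference group $H_i$ of $A_i$ is the subgroup generated by all $x-y$ with $x,y\in A_i$; $A_i$ lies in a single coset of $H_i$ and $|A_i|\le|H_i|$. A collection $\{A_1,\dots,A_m\}$ of pairwise disjoint subsets of $G$ is bimodal if for every $i$ and every $\delta\in G\setminus\{0\}$, the number $N_i(\delta)$ of pairs $(a,b)$ with $a\in A_i$, $b\in A_j$ for some $j\neq i$, and $a-b=\delta$, satisfies $N_i(\delta)\in\{0,|A_i|\}$. (For such collections with $r\ge2$ the set $D$ equals $(a_i+H_i)\setminus A_i$ for every $i\le r$ and is a coset of a subgroup; canonical position means the collection has been translated so that $D$ is a subgroup.) *)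

From mathcomp Require Import all_boot all_order all_algebra all_fingroup.
Set Implicit Arguments. Unset Strict Implicit. Unset Printing Implicit Defensive.
Import GRing.Theory.
Local Open Scope ring_scope.

(* G : finZmodType is a finite abelian group written additively; through
   finalg it is also a finGroupType whose group law is +, so the library's
   generated subgroup <<S>> and group_set apply. *)

Section Bimodal.
Variable G : finZmodType.

Definition diffgroup (X : {set G}) : {set G} :=
  <<[set x - y | x in X, y in X]>>%g.

Definition tr (a : G) (S : {set G}) : {set G} := [set a + s | s in S].

Definition setsum (I : finType) (P : pred I) (F : I -> {set G}) : {set G} :=
  \big[(fun X Y : {set G} => [set x + y | x in X, y in Y]) / [set 0]]_(i | P i) F i.

Variable m : nat.
Variable A : 'I_m -> {set G}.

Definition others (i : 'I_m) : {set G} := \bigcup_(j | j != i) A j.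

Definition Ncount (i : 'I_m) (d : G) : nat :=
  #|[set p : G * G | (p.1 \in A i) && (p.2 \in others i) && (p.1 - p.2 == d)]|.

Definition pairwise_disjoint : Prop :=
  forall i j : 'I_m, i != j -> [disjoint A i & A j].

Definition bimodal : Prop :=
  pairwise_disjoint /\
  forall (i : 'I_m) (d : G), d != 0 -> (Ncount i d == 0)%N || (Ncount i d == #|A i|).

End Bimodal.

From mathcomp Require Import all_boot all_order all_algebra all_fingroup.
Set Implicit Arguments. Unset Strict Implicit. Unset Printing Implicit Defensive.
Import GRing.Theory FinRing.Theory.
Local Open Scope ring_scope.

(* The key consequence of bimodality is that, for every i, the union of the
   blocks other than A_i is invariant under translation by H_i.  In canonical
   position 0 lies in D, so 0 is not in A and A_1 is contained in H_1.  Then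
   every A_k with k <= r lies in H_k: otherwise H_k would be contained in H_1
   and A_k would fill its H_k-coset.  Hence a point of A outside H avoids the
   blocks A_k with k <= r, so A \ H is invariant under each such H_k, i.e.
   under H.  For k > r the block A_k is a full H_k-coset, so all of A is
   H_k-invariant, and as 0 is not in A this forces H_k <= H. *)

Section AdditiveSubgroups.
Variable G : finZmodType.
Implicit Types (a b h x y : G) (S X : {set G}) (K : {group G}).

Lemma group0 K : (0 : G) \in K.
Proof. exact: group1. Qed.

Lemma groupN K x : (- x \in K) = (x \in K).
Proof. exact: groupV. Qed.

Lemma groupDl K x y : x \in K -> (x + y \in K) = (y \in K).
Proof. exact: groupMl. Qed.

Lemma groupDr K x y : x \in K -> (y + x \in K) = (y \in K).
Proof. exact: groupMr. Qed.

Lemma mem_tr a S y : (y \in tr a S) = (y - a \in S).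
Proof.
apply/imsetP/idP => [[s sS ->]|yaS]; first by rewrite addrC addKr.
by exists (y - a); rewrite // addrC subrK.
Qed.

Lemma card_tr a S : #|tr a S| = #|S|.
Proof. exact/card_imset/addrI. Qed.

Canonical diffgroup_group X := [group of diffgroup X].

Lemma mem_diffgroup X x y : x \in X -> y \in X -> x - y \in diffgroup X.
Proof. by move=> xX yX; apply/mem_gen/imset2_f. Qed.

Lemma sub_tr_diffgroup X b : b \in X -> X \subset tr b (diffgroup X).
Proof. by move=> bX; apply/subsetP => x xX; rewrite mem_tr mem_diffgroup. Qed.

Lemma full_diffgroupE X b :
  b \in X -> (#|diffgroup X| <= #|X|)%N = (tr b (diffgroup X) \subset X).
Proof.
move=> bX; apply/idP/idP => [full|/subset_leq_card]; last by rewrite card_tr.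
have /eqP <- // : X == tr b (diffgroup X).
by rewrite eqEcard sub_tr_diffgroup // card_tr.
Qed.

Lemma zmod_commute_sets (A B : {set G}) : commute A B.
Proof. exact/centC/(sub_abelian_cent2 (zmod_abelian setT))/subsetT/subsetT. Qed.

Lemma setsum_gen (I : finType) (P : pred I) (F : I -> {set G}) :
  (forall i, P i -> group_set (F i)) -> setsum P F = <<\bigcup_(i | P i) F i>>%g.
Proof.
move=> gF; rewrite /setsum; elim/big_rec2: _ => [|i U V Pi ->]; first by rewrite gen0.
pose Fi := Group (gF i Pi); change ((Fi * <<V>>)%g = <<Fi :|: V>>%g).
by rewrite -comm_joingE ?joing_idr //; apply: zmod_commute_sets.
Qed.

Lemma sub_diffgroup X b : b \in X -> b \in diffgroup X -> X \subset diffgroup X.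
Proof.
move=> bX bH; have nbH : - b \in diffgroup X by rewrite groupN.
by apply/subsetP => x xX; rewrite -(groupDr _ nbH) mem_diffgroup.
Qed.

Definition periods S := [set h | [forall x in S, x + h \in S]].

Lemma periodsP S h : reflect (forall x, x \in S -> x + h \in S) (h \in periods S).
Proof. by rewrite inE; apply: (iffP forall_inP). Qed.

Lemma periods_group_set S : group_set (periods S).
Proof.
apply/group_setP; split=> [|h k /periodsP hS /periodsP kS].
  by apply/periodsP => x xS; rewrite [_ + _]addr0.
by apply/periodsP => x xS; rewrite [(h * k)%g]/= addrA kS ?hS.
Qed.

Canonical periods_group S := Group (periods_group_set S).

Lemma periods_addr S h x : h \in periods S -> (x + h \in S) = (x \in S).
Proof.
move=> hP; apply/idP/idP; last exact: (periodsP _ _ hP).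
by rewrite -groupN in hP => /(periodsP _ _ hP); rewrite addrK.
Qed.

Lemma tr_sub_periods S K x : K \subset periods S -> x \in S -> tr x K \subset S.
Proof.
move=> sKP xS; apply/subsetP => y; rewrite mem_tr => /(subsetP sKP)/periodsP.
by move/(_ x xS); rewrite addrC subrK.
Qed.

Lemma periodic_cosets S K : K \subset periods S -> S = \bigcup_(x in S) tr x K.
Proof.
move=> sKP; apply/eqP; rewrite eqEsubset; apply/andP; split.
  by apply/subsetP => x xS; apply/bigcupP; exists x; rewrite // mem_tr subrr group0.
by apply/bigcupsP => x xS; apply: tr_sub_periods.
Qed.

End AdditiveSubgroups.

Section Bimodal.
Variables (G : finZmodType) (m : nat) (A : 'I_m -> {set G}).
Hypotheses (Abim : bimodal A) (Ane : forall i, A i != set0).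
Local Notation AA := (\bigcup_i A i).

Lemma bigcup_others i : AA = A i :|: others A i.
Proof. by rewrite (bigD1 i). Qed.

Lemma mem_others i x : x \in others A i -> x \in AA.
Proof. by rewrite (bigcup_others i) inE orbC => ->. Qed.

Lemma disjoint_others i : [disjoint A i & others A i].
Proof. by apply/bigcup_disjoint => j ji; rewrite disjoint_sym Abim.1. Qed.

Lemma notin_others i x : x \in A i -> x \notin others A i.
Proof. by move=> xA; rewrite (disjointFr (disjoint_others i) xA). Qed.

Lemma mem_others_subr i d a :
  d != 0 -> (0 < Ncount A i d)%N -> a \in A i -> a - d \in others A i.
Proof.
move=> d0 Npos aA; have /orP[/eqP N0|/eqP NA] := Abim.2 i d d0.
  by rewrite N0 in Npos.
(* p |-> p.1 is injective on the pairs counted by N_i(d), so their number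
   |A_i| forces every a in A_i to be a first coordinate. *)
rewrite /Ncount in NA; set Sp := [set p | _] in NA.
have inj : {in Sp &, injective fst}.
  move=> [x y] [x' y']; rewrite !inE /= => /andP[_ /eqP <-] /andP[_ /eqP e] ex.
  rewrite /= in ex; rewrite ex in e *; congr (_, _).
  by apply/oppr_inj/(addrI x'); rewrite e.
have : a \in fst @: Sp.
  have /eqP -> // : fst @: Sp == A i.
  rewrite eqEcard card_in_imset // -NA leqnn andbT.
  by apply/subsetP => _ /imsetP[p + ->]; rewrite inE => /andP[/andP[]].
case/imsetP => -[a' y]; rewrite inE /= => /andP[/andP[_ yO] /eqP <-] ->.
by rewrite opprB addrC subrK.
Qed.

Lemma diffgroup_periods_others i : diffgroup (A i) \subset periods (others A i).
Proof.
rewrite gen_subG; apply/subsetP => _ /imset2P[a a' aA a'A ->].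
apply/periodsP => x xO; have d0 : a' - x != 0.
  by rewrite subr_eq0; apply: contraTneq xO => <-; apply: notin_others.
have Npos : (0 < Ncount A i (a' - x)%R)%N.
  by rewrite /Ncount; apply/card_gt0P; exists (a', x); rewrite inE /= a'A xO eqxx.
by have := mem_others_subr d0 Npos aA; rewrite opprB addrCA.
Qed.

Lemma others_addr i x h :
  h \in diffgroup (A i) -> (x + h \in others A i) = (x \in others A i).
Proof. by move=> hH; rewrite periods_addr // (subsetP (diffgroup_periods_others i)). Qed.

Lemma others_addr_bigcup i x h :
  x \in others A i -> h \in diffgroup (A i) -> x + h \in AA.
Proof. by move=> xO hH; apply: (@mem_others i); rewrite others_addr. Qed.

Lemma mem_bigcup_coset k b h : b \in A k -> h \in diffgroup (A k) ->
  (b + h \in AA) = (b + h \in A k).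
Proof.
move=> bA hH; rewrite (bigcup_others k) inE.
by rewrite others_addr // (negbTE (notin_others bA)) orbF.
Qed.

Lemma full_periods_bigcup i :
  (#|diffgroup (A i)| <= #|A i|)%N -> diffgroup (A i) \subset periods AA.
Proof.
move=> full; apply/subsetP => h hH; apply/periodsP => x.
rewrite (bigcup_others i) !inE => /orP[xA|xO].
  have: tr x (diffgroup (A i)) \subset A i by rewrite -full_diffgroupE.
  by move/subsetP/(_ (x + h)); rewrite mem_tr (addrC x h) addrK => ->.
by rewrite others_addr ?xO ?orbT.
Qed.

Lemma full_of_diffgroup_sub i j : j != i ->
  diffgroup (A j) \subset diffgroup (A i) -> (#|diffgroup (A j)| <= #|A j|)%N.
Proof.
move=> ji sHji; have /set0Pn[b bA] := Ane j.
rewrite (full_diffgroupE bA); apply/subsetP => y; rewrite mem_tr => hH.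
have bO : b \in others A i by apply/bigcupP; exists j.
have yO : y \in others A i by rewrite -(subrKC b y) others_addr // (subsetP sHji).
by rewrite -(subrKC b y) -mem_bigcup_coset // subrKC (mem_others yO).
Qed.

End Bimodal.

Section CanonicalPosition.
Variables (G : finZmodType) (m r : nat) (A : 'I_m -> {set G}).
Hypotheses (Abim : bimodal A) (Ane : forall i, A i != set0).
Hypothesis Hlab : forall i : 'I_m, (#|A i| < #|diffgroup (A i)|)%N = (i < r)%N.
Variables (a1 : G) (i1 : 'I_m).
Hypotheses (i1r : (i1 < r)%N) (a1A : a1 \in A i1).
Hypothesis Dsub : group_set (tr a1 (diffgroup (A i1)) :\: A i1).
Local Notation AA := (\bigcup_i A i).
Local Notation H := <<\bigcup_(i : 'I_m | (i < r)%N) diffgroup (A i)>>%g.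

Lemma zero_in_D : (0 : G) \in tr a1 (diffgroup (A i1)) :\: A i1.
Proof. exact: (group1 (Group Dsub)). Qed.

Lemma A1_sub_diffgroup : A i1 \subset diffgroup (A i1).
Proof.
apply: (sub_diffgroup a1A); rewrite -groupN -sub0r.
by have := zero_in_D; rewrite !inE mem_tr => /andP[].
Qed.

Lemma zero_notin_bigcup : (0 : G) \notin AA.
Proof.
have := zero_in_D; rewrite !inE mem_tr => /andP[zA zH].
by rewrite -(subrKC a1 0) (mem_bigcup_coset Abim a1A zH) subrKC.
Qed.

Lemma notin_others_diffgroup i h : h \in diffgroup (A i) -> h \notin others A i.
Proof.
move=> hH; have nhH : - h \in diffgroup (A i) by rewrite groupN.
rewrite -(others_addr Abim _ nhH) subrr; apply: contra zero_notin_bigcup.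
exact: mem_others.
Qed.

Lemma diffgroup_sub_diffgroup1 k : k != i1 -> [disjoint A k & diffgroup (A k)] ->
  diffgroup (A k) \subset diffgroup (A i1).
Proof.
move=> ki1 disA; apply/subsetP => h hH.
have a1H := subsetP A1_sub_diffgroup a1 a1A.
have hAA : h \notin AA.
  rewrite (bigcup_others A k) inE negb_or (disjointFl disA hH).
  by rewrite notin_others_diffgroup.
have a1O : a1 \in others A k by apply/bigcupP; exists i1; rewrite // eq_sym.
have := others_addr_bigcup Abim a1O hH.
rewrite (bigcup_others A i1) inE addrC (others_addr Abim) // => /orP[|hO].
  by move/(subsetP A1_sub_diffgroup); rewrite groupDr.
by rewrite (mem_others hO) in hAA.
Qed.

Lemma A_sub_diffgroup (k : 'I_m) : (k < r)%N -> A k \subset diffgroup (A k).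
Proof.
move=> kr; have [->|ki1] := eqVneq k i1; first exact: A1_sub_diffgroup.
have [disA|] := boolP [disjoint A k & diffgroup (A k)].
  have := full_of_diffgroup_sub Abim Ane ki1 (diffgroup_sub_diffgroup1 ki1 disA).
  by rewrite leqNgt Hlab kr.
by rewrite -setI_eq0 => /set0Pn[b /setIP[bA bH]]; apply: sub_diffgroup bA bH.
Qed.

Lemma diffgroup_sub_sum_lt (i : 'I_m) : (i < r)%N -> diffgroup (A i) \subset H.
Proof.
move=> ir; apply: sub_gen.
exact: (bigcup_sup (P := fun j : 'I_m => (j < r)%N) (F := fun j => diffgroup (A j)) i ir).
Qed.

Lemma diffgroup_sum_periods : H \subset periods (AA :\: H).
Proof.
rewrite gen_subG; apply/bigcupsP => k kr; apply/subsetP => h hH.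
have hHH := subsetP (diffgroup_sub_sum_lt kr) h hH.
apply/periodsP => x; rewrite !inE groupDr // => /andP[xnH xAA]; rewrite xnH /=.
have xO : x \in others A k.
  move: xAA; rewrite (bigcup_others A k) inE => /orP[xA|//]; case/negP: xnH.
  exact/(subsetP (diffgroup_sub_sum_lt kr))/(subsetP (A_sub_diffgroup kr)).
exact (others_addr_bigcup Abim xO hH).
Qed.

Lemma diffgroup_sub_sum i : diffgroup (A i) \subset H.
Proof.
have [|] := boolP (i < r)%N; first exact: diffgroup_sub_sum_lt.
rewrite -Hlab -leqNgt => /(full_periods_bigcup Abim) HiP.
have a1H := subsetP (diffgroup_sub_sum_lt i1r) a1 (subsetP A1_sub_diffgroup a1 a1A).
have a1AA : a1 \in AA by apply/bigcupP; exists i1.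
(* k in H_i outside H would give a1 + k, hence k, in AA \ H, and then
   0 = k - k in AA. *)
apply/subsetP => k kH; apply: contraR zero_notin_bigcup => knH.
have kS : k \in AA :\: H.
  rewrite -(periods_addr _ (subsetP diffgroup_sum_periods a1 a1H)) addrC !inE groupDl //.
  by rewrite knH (periodsP _ _ (subsetP HiP k kH)).
have nkH : - k \in diffgroup (A i) by rewrite groupN.
by rewrite -(subrr k) (periodsP _ _ (subsetP HiP _ nkH)) //; case/setDP: kS.
Qed.

Lemma sub_tr_sum i b : b \in A i -> A i \subset tr b H.
Proof.
by move=> bA; rewrite (subset_trans (sub_tr_diffgroup bA)) ?imsetS ?diffgroup_sub_sum.
Qed.

Lemma bigcupD_cosets : AA :\: H = \bigcup_(x in AA :\: H) tr x H.
Proof. exact/periodic_cosets/diffgroup_sum_periods. Qed.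

Lemma bigcupD_blocks : AA :\: H = \bigcup_(i | A i \subset AA :\: H) A i.
Proof.
apply/eqP; rewrite eqEsubset; apply/andP; split; last by apply/bigcupsP.
apply/subsetP => x xS; have /setDP[/bigcupP[j _ xA] _] := xS.
apply/bigcupP; exists j => //.
exact: subset_trans (sub_tr_sum xA) (tr_sub_periods diffgroup_sum_periods xS).
Qed.

End CanonicalPosition.

Theorem proposition3p9 (G : finZmodType) (m r : nat) (A : 'I_m -> {set G})
  (Abim : bimodal A)
  (Ane : forall i, A i != set0)
  (r2 : (2 <= r)%N) (rm : (r <= m)%N)
  (Hlab : forall i : 'I_m, (#|A i| < #|diffgroup (A i)|)%N = (i < r)%N)
  (a1 : G) (i1 : 'I_m) (i1_0 : val i1 = 0%N) (a1A : a1 \in A i1)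
  (Dsub : group_set (tr a1 (diffgroup (A i1)) :\: A i1)) :
  let AA := \bigcup_i A i in
  let H := setsum (fun i : 'I_m => (i < r)%N) (fun i => diffgroup (A i)) in
  AA :\: H != set0 ->
  AA :\: H = \bigcup_(x in AA :\: H) tr x H /\
  AA :\: H = \bigcup_(i | A i \subset AA :\: H) A i /\
  (forall i, A i \subset AA :\: H -> exists x, A i \subset tr x H).
Proof.
move=> AA H _; have i1r : (i1 < r)%N by rewrite i1_0 (leq_trans _ r2).
have -> : H = <<\bigcup_(i : 'I_m | (i < r)%N) diffgroup (A i)>>%g.
  by apply: setsum_gen => i _; apply: groupP.
split; [|split].
- exact (bigcupD_cosets Abim Ane Hlab a1A Dsub).
- exact (bigcupD_blocks Abim Ane Hlab i1r a1A Dsub).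
- move=> i _; have /set0Pn[b bA] := Ane i; exists b.
  exact (sub_tr_sum Abim Ane Hlab i1r a1A Dsub bA).
Qed.
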